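(* Let $X$ be a Tychonoff space and $\mathcal A\subset\mathcal P(X)$ a family satisfying (A1)–(A4). For each $A\in\mathcal A$ let $cA$ and $dA$ be Hausdorff compactifications of $A$ (with $A$ carrying the subspace topology), and write $c\mathcal A=(cA)_{A\in\mathcal A}$, $d\mathcal A=(dA)_{A\in\mathcal A}$. (i) For every space $\mathcal E=(E(A))_{A\in\mathcal A}$ as in the definition of amalgamation and every regular space $Z$, a map $f:\mathrm{Amg}(X,\mathcal E)\to Z$ is continuous iff $f|_X$ and all $f|_{E(A)}$, $A\in\mathcal A$, are continuous. (ii) $\mathrm{Amg}(X,c\mathcal A)$ is a (Hausdorff) compactification of $X$. (iii) If $cA\preceq dA$ for every $A\in\mathcal A$, then $\mathrm{Amg}(X,c\mathcal A)\preceq\mathrm{Amg}(X,d\mathcal A)$. (iv) For every compactification $cX$ of $X$, $\mathrm{Amg}(X,(\overline A^{cX})_{A\in\mathcal A})\succeq cX$. (v) In particular, $\beta X=\mathrm{Amg}(X,(\beta A)_{A\in\mathcal A})$.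
   Context: Conditions on $\mathcal A\subset\mathcal P(X)$: (A1) every $A\in\mathcal A$ is clopen in $X$; (A2) $A\cap A'$ is compact for distinct $A,A'\in\mathcal A$; (A3) $K:=X\setminus\bigcup\mathcal A$ is compact; (A4) for every collection $\mathcal U$ of open subsets of $X$ covering $K$ there is a finite $\mathcal A'\subset\mathcal A$ such that for each $A\in\mathcal A\setminus\mathcal A'$ some $U\in\mathcal U$ satisfies $U\cup\bigcup\mathcal A'\supset A$. Amalgamation: let $\mathcal E=(E(A))_{A\in\mathcal A}$ be topological spaces with $A$ a dense subspace of $E(A)$. The set $\mathrm{Amg}(X,\mathcal E)=X\cup\bigcup_{A}E(A)$ is formed so that $X\cap E(A)=A$ and $E(A)\cap E(A')=A\cap A'$ for $A\ne A'$. For $P\subset Q$ spaces and $G$ open in $P$, $W^Q_P(G)$ denotes the largest open $W\subset Q$ with $W\cap P=G$. For $U$ open in $X$, $V_U=U\cup\bigcup_{A\in\mathcal A}W^{E(A)}_A(U\cap A)$. The topology of $\mathrm{Amg}(X,\mathcal E)$ has as basis all open subsets of each $E(A)$ and all $V_U$, $U$ open in $X$. Compactification order: $cX\succeq dX$ if there is a continuous $f:cX\to dX$ with $f|_X=\mathrm{id}_X$. $\beta$ denotes Čech–Stone compactification. *)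

From Stdlib Require Import Reals Lra List Classical ClassicalEpsilon.
Open Scope R_scope.

Record space := Space {
  pt :> Type;
  isopen : (pt -> Prop) -> Prop;
  open_setT : isopen (fun _ => True);
  open_setI : forall U V, isopen U -> isopen V -> isopen (fun x => U x /\ V x);
  open_bigU : forall F : (pt -> Prop) -> Prop,
      (forall U, F U -> isopen U) -> isopen (fun x => exists U, F U /\ U x)
}.
Arguments isopen {s} _.

Definition isclosed {X : space} (F : X -> Prop) := isopen (fun x => ~ F x).
Definition clopen {X : space} (A : X -> Prop) := isopen A /\ isclosed A.

Definition continuous {X Y : space} (f : X -> Y) :=
  forall V : Y -> Prop, isopen V -> isopen (fun x => V (f x)).

Definition closure {X : space} (P : X -> Prop) : X -> Prop :=
  fun x => forall U, isopen U -> U x -> exists y, P y /\ U y.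

Definition sub_open (X : space) (P : X -> Prop) (V : {x : X | P x} -> Prop) :=
  exists U : X -> Prop, isopen U /\ forall x, V x <-> U (proj1_sig x).

Lemma sub_open_setT (X : space) (P : X -> Prop) : sub_open X P (fun _ => True).
Proof. exists (fun _ => True); split; [apply open_setT| tauto]. Qed.

Lemma sub_open_setI (X : space) (P : X -> Prop) U V :
  sub_open X P U -> sub_open X P V -> sub_open X P (fun x => U x /\ V x).
Proof.
  intros [U' [HU HU']] [V' [HV HV']]. exists (fun x => U' x /\ V' x).
  split; [apply open_setI; auto|]. intros x; rewrite HU', HV'; tauto.
Qed.

Lemma sub_open_bigU (X : space) (P : X -> Prop) (F : ({x : X | P x} -> Prop) -> Prop) :
  (forall U, F U -> sub_open X P U) ->
  sub_open X P (fun x => exists U, F U /\ U x).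
Proof.
  intros HF.
  exists (fun y => exists W, (isopen W /\ exists V, F V /\
                     forall x, V x <-> W (proj1_sig x)) /\ W y).
  split.
  - apply open_bigU. intros W [HW _]; exact HW.
  - intros x; split.
    + intros [V [HV Vx]]. destruct (HF V HV) as [W [HW HW']].
      exists W; split; [split; [exact HW| exists V; auto]| apply HW'; exact Vx].
    + intros [W [[_ [V [HV HV']]] Wx]]. exists V; split; [exact HV| apply HV'; exact Wx].
Qed.

Definition sub (X : space) (P : X -> Prop) : space :=
  Space {x : X | P x} (sub_open X P) (sub_open_setT X P)
        (sub_open_setI X P) (sub_open_bigU X P).

Definition R_open (U : R -> Prop) :=
  forall x, U x -> exists e, 0 < e /\ forall y, Rabs (y - x) < e -> U y.

Lemma R_open_setT : R_open (fun _ => True).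
Proof. intros x _; exists 1; split; [lra| auto]. Qed.

Lemma R_open_setI U V : R_open U -> R_open V -> R_open (fun x => U x /\ V x).
Proof.
  intros HU HV x [Ux Vx]. destruct (HU x Ux) as [e1 [He1 H1]].
  destruct (HV x Vx) as [e2 [He2 H2]]. exists (Rmin e1 e2); split.
  - apply Rmin_pos; auto.
  - intros y Hy; split; [apply H1| apply H2];
      eapply Rlt_le_trans; eauto; [apply Rmin_l| apply Rmin_r].
Qed.

Lemma R_open_bigU (F : (R -> Prop) -> Prop) :
  (forall U, F U -> R_open U) -> R_open (fun x => exists U, F U /\ U x).
Proof.
  intros HF x [U [HU Ux]]. destruct (HF U HU x Ux) as [e [He H]].
  exists e; split; [exact He|]. intros y Hy; exists U; auto.
Qed.

Definition R_space : space := Space R R_open R_open_setT R_open_setI R_open_bigU.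

Definition T1 (X : space) :=
  forall x y : X, x <> y -> exists U, isopen U /\ U y /\ ~ U x.

Definition hausdorff (X : space) :=
  forall x y : X, x <> y -> exists U V, isopen U /\ isopen V /\ U x /\ V y /\
    forall z, ~ (U z /\ V z).

Definition regular (X : space) :=
  T1 X /\ forall (F : X -> Prop) (x : X), isclosed F -> ~ F x ->
    exists U V, isopen U /\ isopen V /\ U x /\ (forall y, F y -> V y) /\
      forall z, ~ (U z /\ V z).

Definition tychonoff (X : space) :=
  T1 X /\ forall (F : X -> Prop) (x : X), isclosed F -> ~ F x ->
    exists f : X -> R_space, continuous f /\ f x = 0 /\ forall y, F y -> f y = 1.

Definition compact (X : space) :=
  forall F : (X -> Prop) -> Prop, (forall U, F U -> isopen U) ->
    (forall x, exists U, F U /\ U x) ->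
    exists l : list (X -> Prop), (forall U, In U l -> F U) /\
      forall x, exists U, In U l /\ U x.

Definition compact_set {X : space} (K : X -> Prop) :=
  forall F : (X -> Prop) -> Prop, (forall U, F U -> isopen U) ->
    (forall x, K x -> exists U, F U /\ U x) ->
    exists l : list (X -> Prop), (forall U, In U l -> F U) /\
      forall x, K x -> exists U, In U l /\ U x.

Definition embedding {Y E : space} (h : Y -> E) :=
  (forall y1 y2, h y1 = h y2 -> y1 = y2) /\ continuous h /\
  forall U : Y -> Prop, isopen U -> exists W : E -> Prop, isopen W /\
    forall y, U y <-> W (h y).

Definition dense_image {Y E : space} (h : Y -> E) :=
  forall W : E -> Prop, isopen W -> forall e, W e -> exists y, W (h y).

Definition compactification (Y K : space) (h : Y -> K) :=
  compact K /\ hausdorff K /\ embedding h /\ dense_image h.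

(* cY >= dY : there is a continuous f : cY -> dY which is the identity on Y *)
Definition comp_ge {Y K1 K2 : space} (h1 : Y -> K1) (h2 : Y -> K2) :=
  exists f : K1 -> K2, continuous f /\ forall y, f (h1 y) = h2 y.

Definition cech_stone (Y K : space) (h : Y -> K) :=
  compactification Y K h /\
  forall (Z : space) (f : Y -> Z), compact Z -> hausdorff Z -> continuous f ->
    exists F : K -> Z, continuous F /\ forall y, F (h y) = f y.

Definition residual {X : space} (AA : (X -> Prop) -> Prop) : X -> Prop :=
  fun x => ~ exists A, AA A /\ A x.

Definition condA1 {X : space} (AA : (X -> Prop) -> Prop) :=
  forall A, AA A -> clopen A.
Definition condA2 {X : space} (AA : (X -> Prop) -> Prop) :=
  forall A A', AA A -> AA A' -> A <> A' -> compact_set (fun x => A x /\ A' x).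
Definition condA3 {X : space} (AA : (X -> Prop) -> Prop) :=
  compact_set (residual AA).
Definition condA4 {X : space} (AA : (X -> Prop) -> Prop) :=
  forall UU : (X -> Prop) -> Prop, (forall U, UU U -> isopen U) ->
    (forall x, residual AA x -> exists U, UU U /\ U x) ->
    exists l : list (X -> Prop), (forall A, In A l -> AA A) /\
      forall A, AA A -> ~ In A l ->
        exists U, UU U /\ forall x, A x -> U x \/ exists A', In A' l /\ A' x.

Definition Idx (X : space) (AA : (X -> Prop) -> Prop) := {A : X -> Prop | AA A}.

Definition Asp {X : space} {AA : (X -> Prop) -> Prop} (i : Idx X AA) : space :=
  sub X (proj1_sig i).

Section Amalgamation.
Variables (X : space) (AA : (X -> Prop) -> Prop)
  (E : Idx X AA -> space) (emb : forall i, Asp i -> E i).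

(* X together with the remainders E(A) \ A; thus X ∩ E(A) = A and
   E(A) ∩ E(A') = A ∩ A' for A <> A'. *)
Definition amg_carrier : Type :=
  (X + {i : Idx X AA & {e : E i | ~ exists a, emb i a = e}})%type.

Definition amg_in (x : X) : amg_carrier := inl x.

(* the inclusion E(A) -> Amg(X, E) *)
Definition amg_j (i : Idx X AA) (e : E i) : amg_carrier :=
  match excluded_middle_informative (exists a, emb i a = e) with
  | left H => inl (proj1_sig (proj1_sig (constructive_indefinite_description _ H)))
  | right H => inr (existT _ i (exist _ e H))
  end.

(* W^{E(A)}_A(G): the largest open W of E(A) with W ∩ A = G *)
Definition Wmax (i : Idx X AA) (G : Asp i -> Prop) : E i -> Prop :=
  fun e => exists W : E i -> Prop, isopen W /\ (forall a, W (emb i a) <-> G a) /\ W e.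

(* V_U = U ∪ ⋃_A W^{E(A)}_A(U ∩ A) *)
Definition VU (U : X -> Prop) : amg_carrier -> Prop :=
  fun p => match p with
           | inl x => U x
           | inr (existT _ i (exist _ e _)) => Wmax i (fun a => U (proj1_sig a)) e
           end.

Definition amg_basic (B : amg_carrier -> Prop) :=
  (exists i (O : E i -> Prop), isopen O /\
     forall p, B p <-> exists e, O e /\ amg_j i e = p)
  \/ (exists U : X -> Prop, isopen U /\ forall p, B p <-> VU U p).

Definition is_topology {T : Type} (O : (T -> Prop) -> Prop) :=
  O (fun _ => True) /\
  (forall U V, O U -> O V -> O (fun x => U x /\ V x)) /\
  (forall F : (T -> Prop) -> Prop, (forall U, F U -> O U) ->
     O (fun x => exists U, F U /\ U x)).

Definition amg_open (W : amg_carrier -> Prop) :=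
  forall O, is_topology O -> (forall B, amg_basic B -> O B) -> O W.

Lemma amg_open_setT : amg_open (fun _ => True).
Proof. intros O [H _] _; exact H. Qed.

Lemma amg_open_setI U V : amg_open U -> amg_open V -> amg_open (fun x => U x /\ V x).
Proof. intros HU HV O HO HB. pose proof HO as [_ [HI _]]. apply HI; [apply HU| apply HV]; auto. Qed.

Lemma amg_open_bigU (F : (amg_carrier -> Prop) -> Prop) :
  (forall U, F U -> amg_open U) -> amg_open (fun x => exists U, F U /\ U x).
Proof.
  intros HF O HO HB. pose proof HO as [_ [_ HU]]. apply HU. intros U HFU.
  apply HF; auto.
Qed.

Definition Amg : space :=
  Space amg_carrier amg_open amg_open_setT amg_open_setI amg_open_bigU.

End Amalgamation.

Arguments amg_in {X AA E emb} x.
Arguments amg_j {X AA E emb} i e.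

Definition closE {X : space} (AA : (X -> Prop) -> Prop) (K : space) (h : X -> K)
  (i : Idx X AA) : space :=
  sub K (closure (fun k => exists x, proj1_sig i x /\ h x = k)).

Lemma closE_mem {X : space} (AA : (X -> Prop) -> Prop) (K : space) (h : X -> K)
  (i : Idx X AA) (a : Asp i) :
  closure (fun k => exists x, proj1_sig i x /\ h x = k) (h (proj1_sig a)).
Proof. intros U _ HU. exists (h (proj1_sig a)); split; auto. exists (proj1_sig a); split; auto.
  exact (proj2_sig a). Qed.

Definition closEmb {X : space} (AA : (X -> Prop) -> Prop) (K : space) (h : X -> K)
  (i : Idx X AA) (a : Asp i) : closE AA K h i :=
  exist _ (h (proj1_sig a)) (closE_mem AA K h i a).

(* The topology of Amg(X, E) is generated by the images of open subsets of the E(A)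
   and by the sets V_U, so an open set is controlled by its traces: around a remainder
   point of E(A) it contains the image of an open subset of E(A), and around a point of
   the residual set K = X \ ⋃A it contains some V_U.  Density of A in E(A) then gives
   (i) for regular targets.  When the E(A) are compact Hausdorff, (A2) makes the image
   of A ∩ A' open in E(A), so each E(A) maps continuously into the amalgamation;
   compactness follows from (A3) and (A4), which leave finitely many E(A) to cover by
   their own compactness.  Parts (iii)-(v) extend maps given piecewise on X and on the
   E(A), using (i) with a compact Hausdorff, hence regular, target. *)

From Stdlib Require Import Reals Lra List Classical ClassicalEpsilon.
From Stdlib Require Import FunctionalExtensionality PropExtensionality ProofIrrelevance Eqdep.

Lemma isopen_ext {X : space} (U V : X -> Prop) :
  isopen U -> (forall x, U x <-> V x) -> isopen V.
Proof.
  intros HU H.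
  assert (U = V) as <- by (extensionality x; apply propositional_extensionality; auto).
  exact HU.
Qed.

Lemma isopen_of_nbhd {X : space} (P : X -> Prop) :
  (forall x, P x -> exists O, isopen O /\ O x /\ forall y, O y -> P y) -> isopen P.
Proof.
  intros H. apply (isopen_ext (fun x => exists O, (isopen O /\ forall y, O y -> P y) /\ O x)).
  - apply open_bigU. intros U [HU _]; exact HU.
  - intros x; split.
    + intros [O [[_ HO] Ox]]; auto.
    + intros Px. destruct (H x Px) as [O [HO [Ox HOP]]]. exists O; auto.
Qed.

Lemma isopen_or {X : space} (U V : X -> Prop) :
  isopen U -> isopen V -> isopen (fun x => U x \/ V x).
Proof.
  intros HU HV. apply (isopen_ext (fun x => exists W, (W = U \/ W = V) /\ W x)).
  - apply open_bigU. intros W [-> | ->]; auto.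
  - intros x; split; [intros [W [[-> | ->] Hx]]; auto | intros [Hx | Hx]; eauto].
Qed.

Lemma isclosed_not {X : space} (U : X -> Prop) : isopen U -> isclosed (fun x => ~ U x).
Proof.
  intros HU. apply (isopen_ext U); auto. intros x; split; [tauto | apply NNPP].
Qed.

Lemma continuous_ext {X Y : space} (f g : X -> Y) :
  (forall x, f x = g x) -> continuous g -> continuous f.
Proof. intros H Hg. assert (f = g) as -> by (extensionality x; auto). exact Hg. Qed.

Lemma continuous_comp {X Y Z : space} (f : X -> Y) (g : Y -> Z) :
  continuous f -> continuous g -> continuous (fun x => g (f x)).
Proof. intros Hf Hg V HV. exact (Hf _ (Hg V HV)). Qed.

Lemma continuous_proj1_sig (K : space) (P : K -> Prop) :
  @continuous (sub K P) K (fun c => proj1_sig c).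
Proof. intros V HV. exists V. split; auto. tauto. Qed.

Lemma sig_eq {T : Type} {P : T -> Prop} (u v : {x | P x}) :
  proj1_sig u = proj1_sig v -> u = v.
Proof. apply eq_sig_hprop. intros; apply proof_irrelevance. Qed.

Lemma list_choice {A B : Type} (R : A -> B -> Prop) (l : list A) :
  (forall a, In a l -> exists b, R a b) ->
  exists lb, (forall b, In b lb -> exists a, In a l /\ R a b) /\
             (forall a, In a l -> exists b, In b lb /\ R a b).
Proof.
  induction l as [|a l IH]; intros H.
  - exists nil; split; [intros b [] | intros a' []].
  - destruct IH as [lb [H1 H2]]; [intros; apply H; simpl; auto |].
    destruct (H a (or_introl eq_refl)) as [b Hb].
    exists (b :: lb); split.
    + intros b' [<- | Hb']; [exists a; simpl; auto |].
      destruct (H1 b' Hb') as [a' [? ?]]; exists a'; simpl; auto.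
    + intros a' [<- | Ha']; [exists b; simpl; auto |].
      destruct (H2 a' Ha') as [b' [? ?]]; exists b'; simpl; auto.
Qed.

Lemma list_select {A : Type} (P : A -> Prop) (l : list A) :
  exists l', (forall a, In a l' -> P a /\ In a l) /\ forall a, In a l -> P a -> In a l'.
Proof.
  induction l as [|a l [l' [H1 H2]]].
  - exists nil; split; [intros a [] | intros a []].
  - destruct (classic (P a)) as [Pa | Pa]; [exists (a :: l') | exists l']; split.
    + intros b [<- | Hb]; [simpl; auto |]. destruct (H1 b Hb); simpl; auto.
    + intros b [<- | Hb] Pb; simpl; auto.
    + intros b Hb. destruct (H1 b Hb); simpl; auto.
    + intros b [<- | Hb] Pb; [contradiction | auto].
Qed.

Lemma compact_set_ext {X : space} (K K' : X -> Prop) :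
  compact_set K -> (forall x, K x <-> K' x) -> compact_set K'.
Proof.
  intros HK H F HF Hc. destruct (HK F HF) as [l [Hl Hlc]]; [intros x Kx; apply Hc, H, Kx |].
  exists l; split; auto. intros x Kx; apply Hlc, H, Kx.
Qed.

Lemma compact_set_or {X : space} (K1 K2 : X -> Prop) :
  compact_set K1 -> compact_set K2 -> compact_set (fun x => K1 x \/ K2 x).
Proof.
  intros H1 H2 F HF Hcov.
  destruct (H1 F HF) as [l1 [Hl1 Hc1]]; [intros; apply Hcov; auto |].
  destruct (H2 F HF) as [l2 [Hl2 Hc2]]; [intros; apply Hcov; auto |].
  exists (l1 ++ l2). split.
  - intros U HU; apply in_app_or in HU as [HU | HU]; auto.
  - intros x [Hx | Hx];
      [destruct (Hc1 x Hx) as [U [? ?]] | destruct (Hc2 x Hx) as [U [? ?]]];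
      exists U; split; auto; apply in_or_app; auto.
Qed.

Lemma compact_set_meet_union {X : space} (A : X -> Prop) (la : list (X -> Prop)) :
  (forall A', In A' la -> compact_set (fun x => A x /\ A' x)) ->
  compact_set (fun x => A x /\ exists A', In A' la /\ A' x).
Proof.
  induction la as [|A0 la IH]; intros H.
  - intros F _ _. exists nil. split; [intros U [] |]. intros x [_ [A' [[] _]]].
  - apply (compact_set_ext (fun x => (A x /\ A0 x) \/ (A x /\ exists A', In A' la /\ A' x))).
    + apply compact_set_or; [apply H; simpl; auto | apply IH; intros; apply H; simpl; auto].
    + intros x; split.
      * intros [[? ?] | [? [A' [? ?]]]]; split; auto; [exists A0 | exists A']; simpl; auto.
      * intros [Ax [A' [[<- | HA'] HA'x]]]; [left | right]; auto. split; auto; exists A'; auto.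
Qed.

Lemma closed_compact_set {X : space} (F : X -> Prop) :
  compact X -> isclosed F -> compact_set F.
Proof.
  intros HX HF G HG Hcov.
  destruct (HX (fun U => G U \/ U = (fun x => ~ F x))) as [l [Hl Hc]].
  - intros U [HU | ->]; auto.
  - intros x. destruct (classic (F x)) as [Fx | Fx].
    + destruct (Hcov x Fx) as [U [? ?]]; eauto.
    + exists (fun x => ~ F x); auto.
  - destruct (list_select G l) as [l' [H1 H2]]. exists l'. split; [intros U HU; apply H1; auto |].
    intros x Fx. destruct (Hc x) as [U [HUl Ux]]. exists U. split; auto.
    destruct (Hl U HUl) as [GU | ->]; [auto | contradiction].
Qed.

Lemma separate_point_list {X : space} (e : X) (l : list (X -> Prop)) :
  (forall V, In V l -> exists U, isopen U /\ U e /\ forall z, ~ (U z /\ V z)) ->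
  exists U, isopen U /\ U e /\ forall z, U z -> forall V, In V l -> ~ V z.
Proof.
  induction l as [|V l IH]; intros H.
  - exists (fun _ => True). split; [apply open_setT |]. split; [exact I |]. intros z _ V [].
  - destruct IH as [U1 [HU1 [U1e HU1']]]; [intros; apply H; simpl; auto |].
    destruct (H V (or_introl eq_refl)) as [U2 [HU2 [U2e HU2']]].
    exists (fun z => U1 z /\ U2 z). split; [apply open_setI; auto |]. split; auto.
    intros z [Hz1 Hz2] V' [<- | HV'].
    + intro; apply (HU2' z); auto.
    + apply (HU1' z Hz1 V' HV').
Qed.

Lemma separate_point_compact {X : space} (C : X -> Prop) (e : X) :
  hausdorff X -> compact_set C -> ~ C e ->
  exists U V, isopen U /\ isopen V /\ U e /\ (forall c, C c -> V c) /\
    forall z, ~ (U z /\ V z).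
Proof.
  intros HX HC Ce.
  destruct (HC (fun V => isopen V /\ exists U, isopen U /\ U e /\ forall z, ~ (U z /\ V z)))
    as [l [Hl Hlc]].
  - intros U [HU _]; exact HU.
  - intros c Cc. assert (c <> e) as Hce by (intro; subst; contradiction).
    destruct (HX c e Hce) as [V [U [HV [HU [Vc [Ue HUV]]]]]].
    exists V. split; [split; [exact HV | exists U; repeat split; auto] | exact Vc].
    intros z [? ?]; apply (HUV z); auto.
  - destruct (separate_point_list e l) as [U [HU [Ue HU']]]; [intros V HV; apply (Hl V HV) |].
    exists U, (fun z => exists V, In V l /\ V z). repeat split; auto.
    + apply open_bigU. intros V HV; apply (Hl V HV).
    + intros z [Uz [V [HV Vz]]]. apply (HU' z Uz V HV Vz).
Qed.

Lemma compact_set_closed {X : space} (C : X -> Prop) :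
  hausdorff X -> compact_set C -> isclosed C.
Proof.
  intros HX HC. apply isopen_of_nbhd. intros x Cx.
  destruct (separate_point_compact C x HX HC Cx) as [U [V [HU [HV [Ux [HCV HUV]]]]]].
  exists U. repeat split; auto. intros y Uy Cy. apply (HUV y); auto.
Qed.

Lemma hausdorff_T1 (X : space) : hausdorff X -> T1 X.
Proof.
  intros H x y Hxy. destruct (H x y Hxy) as [U [V [HU [HV [Ux [Vy HUV]]]]]].
  exists V. repeat split; auto. intro Vx; apply (HUV x); auto.
Qed.

Lemma compact_hausdorff_regular (X : space) : compact X -> hausdorff X -> regular X.
Proof.
  intros HC HH. split; [apply hausdorff_T1; auto |]. intros F x HF Fx.
  destruct (separate_point_compact F x HH (closed_compact_set F HC HF) Fx) as [U [V ?]].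
  exists U, V; tauto.
Qed.

Lemma R_open_gt (c : R) : R_open (fun r => r > c).
Proof.
  intros r Hr. exists (r - c). split; [lra |]. intros s Hs. apply Rabs_def2 in Hs. lra.
Qed.

Lemma R_open_lt (c : R) : R_open (fun r => r < c).
Proof.
  intros r Hr. exists (c - r). split; [lra |]. intros s Hs. apply Rabs_def2 in Hs. lra.
Qed.

Lemma tychonoff_hausdorff (X : space) : tychonoff X -> hausdorff X.
Proof.
  intros [HT HC] x y Hxy. destruct (HT x y Hxy) as [U [HU [Uy Ux]]].
  destruct (HC (fun z => ~ U z) y (isclosed_not U HU)) as [f [Hf [fy fx]]]; [tauto |].
  specialize (fx x Ux).
  exists (fun z => f z > 1/2), (fun z => f z < 1/2). repeat split.
  - exact (Hf _ (R_open_gt (1/2))).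
  - exact (Hf _ (R_open_lt (1/2))).
  - simpl. rewrite fx; lra.
  - simpl. rewrite fy; lra.
  - intros z [H1 H2]; lra.
Qed.

Section Amalgamation.
Variables (X : space) (AA : (X -> Prop) -> Prop)
  (E : Idx X AA -> space) (emb : forall i, Asp i -> E i).
Hypothesis Hemb : forall i, embedding (emb i) /\ dense_image (emb i).
Hypothesis HA1 : condA1 AA.

Implicit Types (i : Idx X AA).
Local Notation AM := (Amg X AA E emb).
Local Notation jj := (@amg_j X AA E emb).
Local Notation VV := (VU X AA E emb).
Local Notation WM := (Wmax X AA E emb).
Local Notation amg_isopen := (amg_open X AA E emb).

Definition remainder i (e : E i) := ~ exists a, emb i a = e.

Definition amg_image i (O : E i -> Prop) : AM -> Prop := fun p => exists e, O e /\ jj i e = p.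

Lemma emb_inj i a1 a2 : emb i a1 = emb i a2 -> a1 = a2.
Proof. apply (Hemb i). Qed.

Lemma emb_dense i : dense_image (emb i).
Proof. apply (Hemb i). Qed.

Lemma amg_j_emb i a : jj i (emb i a) = inl (proj1_sig a).
Proof.
  unfold amg_j. destruct (excluded_middle_informative _) as [H | H]; [| exfalso; eauto].
  destruct (constructive_indefinite_description _ H) as [a' Ha']; simpl.
  apply emb_inj in Ha'. subst; reflexivity.
Qed.

Lemma amg_j_remainder i e (H : remainder i e) : jj i e = inr (existT _ i (exist _ e H)).
Proof.
  unfold amg_j. destruct (excluded_middle_informative _) as [H' | H']; [contradiction |].
  do 3 f_equal. apply proof_irrelevance.
Qed.

Lemma amg_j_inl i e x : jj i e = inl x -> exists a, emb i a = e /\ proj1_sig a = x.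
Proof.
  unfold amg_j. destruct (excluded_middle_informative _) as [H | H]; [| discriminate].
  destruct (constructive_indefinite_description _ H) as [a' Ha']; simpl.
  intros Heq; injection Heq; intros; eauto.
Qed.

Lemma amg_j_eq_remainder i i' e e' : jj i' e' = jj i e -> remainder i e ->
  existT (fun k => E k) i' e' = existT _ i e.
Proof.
  intros Heq H. rewrite (amg_j_remainder i e H) in Heq.
  destruct (classic (exists a, emb i' a = e')) as [[a <-] | H'].
  - rewrite amg_j_emb in Heq; discriminate.
  - rewrite (amg_j_remainder i' e' H') in Heq. injection Heq; auto.
Qed.

Lemma amg_j_inj i e1 e2 : jj i e1 = jj i e2 -> e1 = e2.
Proof.
  intros Heq. destruct (classic (exists a, emb i a = e2)) as [[a2 <-] | H2].
  - rewrite amg_j_emb in Heq. apply amg_j_inl in Heq as [a1 [<- Ha]].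
    f_equal. apply sig_eq; auto.
  - apply amg_j_eq_remainder in Heq; auto. apply inj_pair2 in Heq; auto.
Qed.

Lemma emb_extend_open i (U : X -> Prop) : isopen U ->
  exists W, isopen W /\ forall a, W (emb i a) <-> U (proj1_sig a).
Proof.
  intros HU. destruct (Hemb i) as [[_ [_ H]] _].
  destruct (H (fun a => U (proj1_sig a))) as [W [HW HW']].
  - exists U; split; auto; tauto.
  - exists W; split; auto. intros a; rewrite <- HW'; tauto.
Qed.

Lemma emb_preimage_open i (O : E i -> Prop) : isopen O ->
  exists U, isopen U /\ forall a, O (emb i a) <-> U (proj1_sig a).
Proof.
  intros HO. destruct (Hemb i) as [[_ [Hc _]] _].
  destruct (Hc O HO) as [U [HU HU']]. exists U; auto.
Qed.

Lemma Wmax_open i G : isopen (WM i G).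
Proof.
  apply (isopen_ext (fun e => exists W, (isopen W /\ (forall a, W (emb i a) <-> G a)) /\ W e)).
  - apply open_bigU. intros W [HW _]; exact HW.
  - intros e; unfold Wmax; split; intros [W H]; exists W; tauto.
Qed.

Lemma Wmax_emb i G a : WM i G (emb i a) -> G a.
Proof. intros [W [_ [H1 H2]]]. apply H1; auto. Qed.

Lemma Wmax_emb_open i U a : isopen U -> U (proj1_sig a) ->
  WM i (fun a => U (proj1_sig a)) (emb i a).
Proof.
  intros HU Ua. destruct (emb_extend_open i U HU) as [W [HW HW']].
  exists W; repeat split; auto; apply HW'; auto.
Qed.

Lemma VU_amg_j i U e : isopen U -> VV U (jj i e) <-> WM i (fun a => U (proj1_sig a)) e.
Proof.
  intros HU. destruct (classic (exists a, emb i a = e)) as [[a <-] | H].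
  - rewrite amg_j_emb. simpl. split; [apply Wmax_emb_open; auto | apply Wmax_emb].
  - rewrite (amg_j_remainder i e H). simpl. tauto.
Qed.

Lemma Wmax_mono i (U1 U2 : X -> Prop) e : isopen U1 -> (forall x, U2 x -> U1 x) ->
  WM i (fun a => U2 (proj1_sig a)) e -> WM i (fun a => U1 (proj1_sig a)) e.
Proof.
  intros HU1 H12 [W [HW [HW' We]]]. destruct (emb_extend_open i U1 HU1) as [W1 [HW1 HW1']].
  exists (fun e => W e \/ W1 e). split; [apply isopen_or; auto |]. split; auto.
  intros a; split.
  - intros [Wa | Wa]; [apply H12, HW'; auto | apply HW1'; auto].
  - intros; right; apply HW1'; auto.
Qed.

Lemma VU_mono (U1 U2 : X -> Prop) p : isopen U1 -> (forall x, U2 x -> U1 x) -> VV U2 p -> VV U1 p.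
Proof. intros HU1 H12. destruct p as [x | [i [e H]]]; simpl; auto. apply Wmax_mono; auto. Qed.

Lemma Wmax_disjoint i (U U' : X -> Prop) e : (forall x, ~ (U x /\ U' x)) ->
  ~ (WM i (fun a => U (proj1_sig a)) e /\ WM i (fun a => U' (proj1_sig a)) e).
Proof.
  intros HUU [[W [HW [HW' We]]] [W' [HW2 [HW2' We']]]].
  destruct (emb_dense i (fun e => W e /\ W' e) (open_setI _ _ _ HW HW2) e (conj We We'))
    as [a [Wa Wa']].
  apply (HUU (proj1_sig a)); split; [apply HW' | apply HW2']; auto.
Qed.

Lemma amg_open_ind (P : (AM -> Prop) -> Prop) : is_topology P ->
  (forall B, amg_basic X AA E emb B -> P B) -> forall W, amg_isopen W -> P W.
Proof. intros HP HB W HW; apply HW; auto. Qed.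

Lemma amg_basic_open B : amg_basic X AA E emb B -> amg_isopen B.
Proof. intros HB O _ H; apply H; auto. Qed.

Lemma amg_image_open i O : isopen O -> amg_isopen (amg_image i O).
Proof. intros HO. apply amg_basic_open. left. exists i, O. split; auto; tauto. Qed.

Lemma VU_open U : isopen U -> amg_isopen (VV U).
Proof. intros HU. apply amg_basic_open. right. exists U. split; auto; tauto. Qed.

Lemma amg_image_disjoint i O1 O2 : (forall e, ~ (O1 e /\ O2 e)) ->
  forall p, ~ (amg_image i O1 p /\ amg_image i O2 p).
Proof.
  intros HO p [[e1 [O1e1 <-]] [e2 [O2e2 Heq]]].
  apply amg_j_inj in Heq. subst. apply (HO e1); auto.
Qed.

Lemma is_topology_preimage {Y : space} (g : Y -> AM) :
  is_topology (fun W => isopen (fun y => W (g y))).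
Proof.
  split; [apply open_setT |]. split.
  - intros U V HU HV. apply open_setI; auto.
  - intros F HF. apply (isopen_ext (fun y => exists V, (exists U, F U /\ V = fun y => U (g y)) /\ V y)).
    + apply open_bigU. intros V [U [HU ->]]; auto.
    + intros y; split.
      * intros [V [[U [HU ->]] HV]]; eauto.
      * intros [U [HU HUy]]. exists (fun y => U (g y)); eauto.
Qed.

Lemma continuous_amg_in : @continuous X AM amg_in.
Proof.
  intros W HW. apply (amg_open_ind (fun W => isopen (fun x : X => W (amg_in x)))); auto.
  - apply is_topology_preimage.
  - intros B [[i [O [HO HB]]] | [U [HU HB]]].
    + destruct (emb_preimage_open i O HO) as [U [HU HU']].
      apply (isopen_ext (fun x => proj1_sig i x /\ U x)).
      * apply open_setI; auto. apply (HA1 _ (proj2_sig i)).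
      * intros x; rewrite HB; split.
        -- intros [Ax Ux]. exists (emb i (exist _ x Ax)). rewrite amg_j_emb.
           split; auto. apply HU'; auto.
        -- intros [e [Oe He]]. apply amg_j_inl in He as [a [<- <-]].
           split; [apply (proj2_sig a) | apply HU'; auto].
    + apply (isopen_ext U); auto. intros x; rewrite HB; simpl; tauto.
Qed.

Lemma amg_open_trace_remainder i S : amg_isopen S ->
  forall e, remainder i e -> S (jj i e) ->
  exists O, isopen O /\ O e /\ forall e', O e' -> S (jj i e').
Proof.
  intros HS. pattern S. refine (amg_open_ind _ _ _ S HS); [split; [| split] |].
  - intros e _ _. exists (fun _ => True). split; [apply open_setT | auto].
  - intros U V HU HV e H [Ue Ve].
    destruct (HU e H Ue) as [O1 [HO1 [O1e H1]]], (HV e H Ve) as [O2 [HO2 [O2e H2]]].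
    exists (fun e => O1 e /\ O2 e). split; [apply open_setI; auto |]. split; auto.
    intros e' [? ?]; split; auto.
  - intros F HF e H [U [FU Ue]]. destruct (HF U FU e H Ue) as [O [HO [Oe HO']]].
    exists O; split; auto; split; auto. intros e' Oe'. exists U; auto.
  - intros B [[i0 [O0 [HO0 HB]]] | [U [HU HB]]] e H HBe.
    + apply HB in HBe as [e0 [O0e0 Heq]]. apply amg_j_eq_remainder in Heq; auto.
      assert (i0 = i) by exact (f_equal (@projT1 _ _) Heq). subst i0.
      apply inj_pair2 in Heq. subst e0.
      exists O0. repeat split; auto. intros e' Oe'. apply HB. eauto.
    + exists (WM i (fun a => U (proj1_sig a))). split; [apply Wmax_open |]. split.
      * apply VU_amg_j; auto. apply HB; auto.
      * intros e' He'. apply HB. apply VU_amg_j; auto.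
Qed.

Lemma amg_open_meets_emb i S e O : amg_isopen S -> S (jj i e) -> isopen O -> O e ->
  exists a, O (emb i a) /\ S (inl (proj1_sig a)).
Proof.
  intros HS Se HO Oe. destruct (classic (exists a, emb i a = e)) as [[a <-] | Hn].
  - exists a. rewrite <- amg_j_emb. auto.
  - destruct (amg_open_trace_remainder i S HS e Hn Se) as [O' [HO' [O'e HO'S]]].
    destruct (emb_dense i (fun e => O e /\ O' e) (open_setI _ _ _ HO HO') e (conj Oe O'e))
      as [a [Oa O'a]].
    exists a. rewrite <- amg_j_emb. auto.
Qed.

Lemma amg_open_residual_nbhd S : amg_isopen S ->
  forall x, residual AA x -> S (inl x) ->
  exists U, isopen U /\ U x /\ forall p, VV U p -> S p.
Proof.
  intros HS. pattern S. refine (amg_open_ind _ _ _ S HS); [split; [| split] |].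
  - intros x _ _. exists (fun _ => True). split; [apply open_setT | auto].
  - intros U V HU HV x H [Ux Vx].
    destruct (HU x H Ux) as [O1 [HO1 [O1x H1]]], (HV x H Vx) as [O2 [HO2 [O2x H2]]].
    exists (fun e => O1 e /\ O2 e). split; [apply open_setI; auto |]. split; auto.
    intros p Hp; split;
      [apply H1, (VU_mono O1 _ p HO1 (fun x => @proj1 _ _) Hp)
      | apply H2, (VU_mono O2 _ p HO2 (fun x => @proj2 _ _) Hp)].
  - intros F HF x H [U [FU Ux]]. destruct (HF U FU x H Ux) as [O [HO [Ox HO']]].
    exists O; split; auto; split; auto. intros p Hp. exists U; auto.
  - intros B [[i0 [O0 [HO0 HB]]] | [U [HU HB]]] x H HBx.
    + apply HB in HBx as [e0 [_ Heq]]. apply amg_j_inl in Heq as [a [_ <-]].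
      exfalso. apply H. exists (proj1_sig i0). split; [apply (proj2_sig i0) | apply (proj2_sig a)].
    + exists U. split; auto. split; [apply (HB (inl x)); auto |]. intros p Hp; apply HB; auto.
Qed.

Lemma continuous_comp_amg_j (Z : space) (f : AM -> Z) i :
  regular Z -> continuous f -> continuous (fun e => f (jj i e)).
Proof.
  intros [_ HZ] Hf V HV. apply isopen_of_nbhd. intros e He.
  destruct (classic (exists a, emb i a = e)) as [[a <-] | Hn].
  - destruct (HZ _ (f (jj i (emb i a))) (isclosed_not V HV)) as [U1 [V1 [HU1 [HV1 [U1e [HFV1 HUV]]]]]];
      [tauto |].
    pose (U := fun x => U1 (f (amg_in x))).
    assert (HU : isopen U) by exact (continuous_comp _ f continuous_amg_in Hf _ HU1).
    exists (WM i (fun a => U (proj1_sig a))). split; [apply Wmax_open |]. split.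
    + apply Wmax_emb_open; auto. unfold U, amg_in. rewrite <- amg_j_emb. auto.
    + intros e' He'. apply NNPP; intro HnV.
      destruct (amg_open_meets_emb i (fun p => V1 (f p)) e' _ (Hf _ HV1) (HFV1 _ HnV)
        (Wmax_open _ _) He') as [a' [Wa' Va']].
      apply Wmax_emb in Wa'. exact (HUV _ (conj Wa' Va')).
  - destruct (amg_open_trace_remainder i (fun p => V (f p)) (Hf _ HV) e Hn He)
      as [O [HO [Oe HO']]].
    exists O; auto.
Qed.

Lemma continuous_of_pieces (Z : space) (f : AM -> Z) : regular Z ->
  continuous (fun x : X => f (amg_in x)) -> (forall i, continuous (fun e : E i => f (jj i e))) ->
  continuous f.
Proof.
  intros [_ HZ] Hin Hj V HV. apply isopen_of_nbhd. intros [x | [i [e H]]] Hp.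
  - destruct (HZ _ (f (inl x)) (isclosed_not V HV)) as [U1 [V1 [HU1 [HV1 [U1x [HFV1 HUV]]]]]];
      [tauto |].
    pose (U := fun x => U1 (f (inl x))).
    exists (VV U). split; [apply VU_open, (Hin _ HU1) |]. split; [exact U1x |].
    intros q Hq. apply NNPP; intro HnV. apply HFV1 in HnV.
    destruct q as [y | [i [e H]]]; [exact (HUV _ (conj Hq HnV)) |].
    destruct Hq as [W [HW [HW' We]]].
    assert (Ve : V1 (f (jj i e))) by (rewrite (amg_j_remainder i e H); exact HnV).
    destruct (emb_dense i (fun e => W e /\ V1 (f (jj i e)))
       (open_setI _ _ _ HW (Hj i _ HV1)) e (conj We Ve)) as [a [Wa Va]].
    apply HW' in Wa. rewrite amg_j_emb in Va. exact (HUV _ (conj Wa Va)).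
  - exists (amg_image i (fun e => V (f (jj i e)))). split; [apply amg_image_open, Hj; auto |].
    split.
    + exists e. rewrite (amg_j_remainder i e H). auto.
    + intros q [e' [He' <-]]. auto.
Qed.

Lemma amg_continuous_iff (Z : space) (f : AM -> Z) : regular Z ->
  (continuous f <->
   continuous (fun x : X => f (amg_in x)) /\ forall i, continuous (fun e : E i => f (jj i e))).
Proof.
  intros HZ. split.
  - intros Hf. split; [exact (continuous_comp _ f continuous_amg_in Hf) |].
    intros i. apply continuous_comp_amg_j; auto.
  - intros [Hin Hj]. apply continuous_of_pieces; auto.
Qed.

Lemma amg_extend (Z : space) (g0 : X -> Z) : regular Z -> continuous g0 ->
  (forall i, exists G : E i -> Z, continuous G /\ forall a, G (emb i a) = g0 (proj1_sig a)) ->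
  exists F : AM -> Z, continuous F /\ forall x, F (amg_in x) = g0 x.
Proof.
  intros HZ H0 HG.
  pose (G := fun i => proj1_sig (constructive_indefinite_description _ (HG i))).
  assert (HG' : forall i, continuous (G i) /\ forall a, G i (emb i a) = g0 (proj1_sig a))
    by (intros i; exact (proj2_sig (constructive_indefinite_description _ (HG i)))).
  exists (fun p : AM => match p with
            | inl x => g0 x
            | inr q => G (projT1 q) (proj1_sig (projT2 q)) end).
  split; [| reflexivity].
  apply continuous_of_pieces; auto. intros i.
  apply (continuous_ext _ (G i)); [| apply HG']. intros e.
  destruct (classic (exists a, emb i a = e)) as [[a <-] | Hn].
  - rewrite amg_j_emb. symmetry; apply HG'.
  - rewrite (amg_j_remainder i e Hn). reflexivity.
Qed.

Lemma compact_set_emb_image i (K : X -> Prop) : compact_set K -> (forall x, K x -> proj1_sig i x) ->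
  compact_set (fun e : E i => exists a, emb i a = e /\ K (proj1_sig a)).
Proof.
  intros HK HKA F HF Hcov.
  destruct (HK (fun U => isopen U /\ exists W, F W /\ forall a, W (emb i a) <-> U (proj1_sig a)))
    as [l [Hl Hlc]].
  - intros U [HU _]; exact HU.
  - intros x Kx. pose (a := exist (proj1_sig i) x (HKA x Kx) : Asp i).
    destruct (Hcov (emb i a)) as [W [FW Wa]]; [exists a; split; auto |].
    destruct (emb_preimage_open i W (HF W FW)) as [U [HU HU']].
    exists U. split; [split; auto; exists W; auto |]. exact (proj1 (HU' a) Wa).
  - destruct (list_choice (fun U W => F W /\ forall a, W (emb i a) <-> U (proj1_sig a)) l)
      as [lw [Hlw1 Hlw2]]; [intros U HU; apply (Hl U HU) |].
    exists lw. split.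
    + intros W HW; destruct (Hlw1 W HW) as [U [_ [FW _]]]; exact FW.
    + intros e [a [<- Ka]]. destruct (Hlc _ Ka) as [U [HUl Ua]].
      destruct (Hlw2 U HUl) as [W [HW [_ HWU]]]. exists W; split; auto; apply HWU; auto.
Qed.

(* The open extension [W] of [A ∩ A'] contains no remainder point, since such a point
   would lie in the closure of the compact, hence closed, set [emb (A ∩ A')]. *)
Lemma emb_meet_open i i' : hausdorff (E i) ->
  compact_set (fun x => proj1_sig i x /\ proj1_sig i' x) ->
  isopen (fun e => exists a, emb i a = e /\ proj1_sig i' (proj1_sig a)).
Proof.
  intros HH HK.
  pose (C := fun e : E i => exists a, emb i a = e /\ (proj1_sig i (proj1_sig a) /\ proj1_sig i' (proj1_sig a))).
  assert (HC : compact_set C) by exact (compact_set_emb_image i _ HK (fun x Hx => proj1 Hx)).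
  destruct (emb_extend_open i (proj1_sig i') (proj1 (HA1 _ (proj2_sig i')))) as [W [HW HW']].
  apply (isopen_ext W _ HW). intros e; split.
  - intros We. apply NNPP; intro Hn.
    assert (HnC : ~ C e) by (intros [a [<- [_ Ha]]]; apply Hn; eauto).
    destruct (separate_point_compact C e HH HC HnC) as [U [V [HU [HV [Ue [HCV HUV]]]]]].
    destruct (emb_dense i (fun e => W e /\ U e) (open_setI _ _ _ HW HU) e (conj We Ue))
      as [a [Wa Ua]].
    apply (HUV (emb i a)). split; auto. apply HCV. exists a.
    split; auto. split; [apply (proj2_sig a) | apply HW'; auto].
  - intros [a [<- Ha]]. apply HW'; auto.
Qed.

Lemma amg_in_embedding : @embedding X AM amg_in.
Proof.
  split; [intros y1 y2 H; injection H; auto |]. split; [apply continuous_amg_in |].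
  intros U HU. exists (VV U). split; [apply VU_open; auto |]. intros y; simpl; tauto.
Qed.

Lemma amg_in_dense : @dense_image X AM amg_in.
Proof.
  intros W HW p Wp. destruct p as [x | [i [e H]]]; [exists x; auto |].
  assert (Wj : W (jj i e)) by (rewrite (amg_j_remainder i e H); exact Wp).
  destruct (amg_open_meets_emb i W e (fun _ => True) HW Wj (open_setT _) I) as [a [_ Wa]].
  exists (proj1_sig a). exact Wa.
Qed.

Hypothesis HXh : hausdorff X.
Hypothesis HA2 : condA2 AA.
Hypothesis HA3 : condA3 AA.
Hypothesis HA4 : condA4 AA.
Hypothesis HEc : forall i, compact (E i) /\ hausdorff (E i).

Lemma compact_set_meet i i' : i <> i' -> compact_set (fun x => proj1_sig i x /\ proj1_sig i' x).
Proof.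
  intros Hne. apply HA2; [apply (proj2_sig i) | apply (proj2_sig i') |].
  intros Heq; apply Hne, sig_eq; auto.
Qed.

Lemma continuous_amg_j i : @continuous (E i) AM (jj i).
Proof.
  intros S HS.
  refine (amg_open_ind (fun S => isopen (fun e => S (jj i e))) (is_topology_preimage _) _ S HS).
  intros B [[i0 [O0 [HO0 HB]]] | [U [HU HB]]].
  - destruct (classic (i0 = i)) as [<- | Hne].
    + apply (isopen_ext O0 _ HO0). intros e. rewrite HB. split; [eauto |].
      intros [e0 [O0e0 Heq]]. apply amg_j_inj in Heq. subst; auto.
    + destruct (emb_preimage_open i0 O0 HO0) as [U0 [HU0 HU0']].
      destruct (emb_extend_open i U0 HU0) as [W [HW HW']].
      apply (isopen_ext (fun e => (exists a, emb i a = e /\ proj1_sig i0 (proj1_sig a)) /\ W e)).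
      { apply open_setI; auto. apply emb_meet_open; [apply HEc | apply compact_set_meet; auto]. }
      intros e. rewrite HB. split.
      * intros [[a [<- Ha]] We]. exists (emb i0 (exist _ (proj1_sig a) Ha)). split.
        -- apply HU0'. apply HW'; auto.
        -- rewrite !amg_j_emb; reflexivity.
      * intros [e0 [O0e0 Heq]]. destruct (classic (exists a, emb i a = e)) as [[a <-] | Hn].
        -- rewrite amg_j_emb in Heq. apply amg_j_inl in Heq as [a0 [<- Ha0]].
           split; [exists a; split; auto; rewrite <- Ha0; apply (proj2_sig a0) |].
           apply HW'. rewrite <- Ha0. apply HU0'; auto.
        -- apply amg_j_eq_remainder in Heq; auto.
           exfalso; apply Hne. exact (f_equal (@projT1 _ _) Heq).
  - apply (isopen_ext (WM i (fun a => U (proj1_sig a))) _ (Wmax_open _ _)).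
    intros e. rewrite HB. symmetry; apply VU_amg_j; auto.
Qed.

Definition separated (p q : AM) := exists U V, amg_isopen U /\ amg_isopen V /\
  U p /\ V q /\ forall z, ~ (U z /\ V z).

Lemma separated_sym p q : separated p q -> separated q p.
Proof.
  intros [U [V [HU [HV [Up [Vq HUV]]]]]].
  exists V, U. repeat split; auto. intros z [? ?]; apply (HUV z); auto.
Qed.

Lemma separated_inl x y : x <> y -> separated (inl x) (inl y).
Proof.
  intros Hxy. destruct (HXh x y Hxy) as [U [U' [HU [HU' [Ux [Uy HUU]]]]]].
  exists (VV U), (VV U'). split; [apply VU_open; auto |]. split; [apply VU_open; auto |].
  split; [exact Ux |]. split; [exact Uy |].
  intros [z | [i [e H]]]; simpl; [apply HUU | apply Wmax_disjoint; auto].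
Qed.

Lemma separated_amg_j i e1 e2 : e1 <> e2 -> separated (jj i e1) (jj i e2).
Proof.
  intros Hne. destruct (proj2 (HEc i) _ _ Hne) as [O1 [O2 [HO1 [HO2 [O1e [O2e HO]]]]]].
  exists (amg_image i O1), (amg_image i O2).
  split; [apply amg_image_open; auto |]. split; [apply amg_image_open; auto |].
  split; [exists e1; auto |]. split; [exists e2; auto |].
  apply amg_image_disjoint; auto.
Qed.

Lemma separated_inl_remainder x i e : remainder i e -> separated (inl x) (jj i e).
Proof.
  intros H. destruct (classic (proj1_sig i x)) as [Ax | Ax].
  - replace (inl x : AM) with (jj i (emb i (exist _ x Ax))) by apply amg_j_emb.
    apply separated_amg_j. intro Heq; apply H; eauto.
  - pose proof (proj2 (HA1 _ (proj2_sig i))) as HnA.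
    exists (VV (fun y => ~ proj1_sig i y)), (amg_image i (fun _ => True)).
    split; [apply VU_open; auto |]. split; [apply amg_image_open, open_setT |].
    split; [exact Ax |]. split; [exists e; auto |].
    intros z [Hz [e2 [_ <-]]]. apply VU_amg_j in Hz; auto.
    destruct Hz as [W [HW [HW' We]]].
    destruct (emb_dense i W HW e2 We) as [a Wa]. apply HW' in Wa. apply Wa, (proj2_sig a).
Qed.

(* [E(A) \ emb (A ∩ A')] and [E(A')] can only share points of [X], which would lie in [A ∩ A']. *)
Lemma separated_remainders i i' e e' : i <> i' -> remainder i e ->
  separated (jj i e) (jj i' e').
Proof.
  intros Hne H.
  pose (C := fun e : E i => exists a, emb i a = e /\ (proj1_sig i (proj1_sig a) /\ proj1_sig i' (proj1_sig a))).
  assert (HC : isclosed C).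
  { apply compact_set_closed; [apply HEc |].
    exact (compact_set_emb_image i _ (compact_set_meet i i' Hne) (fun x Hx => proj1 Hx)). }
  exists (amg_image i (fun e => ~ C e)), (amg_image i' (fun _ => True)).
  split; [apply amg_image_open; auto |]. split; [apply amg_image_open, open_setT |].
  split; [exists e; split; auto; intros [a [<- _]]; apply H; eauto |].
  split; [exists e'; auto |].
  intros z [[e1 [Ce1 <-]] [e2 [_ Heq]]].
  destruct (classic (exists a, emb i a = e1)) as [[a1 <-] | Hn1].
  - rewrite amg_j_emb in Heq. apply amg_j_inl in Heq as [a2 [<- Ha2]]. apply Ce1. exists a1.
    split; auto. split; [apply (proj2_sig a1) | rewrite <- Ha2; apply (proj2_sig a2)].
  - apply amg_j_eq_remainder in Heq; auto. apply Hne. exact (eq_sym (f_equal (@projT1 _ _) Heq)).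
Qed.

Lemma amg_hausdorff : hausdorff AM.
Proof.
  assert (Hj : forall i e (H : remainder i e), jj i e = inr (existT _ i (exist _ e H)))
    by exact amg_j_remainder.
  intros p q Hpq. destruct p as [x | [i [e H]]], q as [y | [i' [e' H']]].
  - apply separated_inl. intros <-; auto.
  - rewrite <- Hj. apply separated_inl_remainder; auto.
  - rewrite <- Hj. apply separated_sym, separated_inl_remainder; auto.
  - rewrite <- Hj, <- Hj. destruct (classic (i = i')) as [<- | Hne].
    + apply separated_amg_j. intros <-. apply Hpq. do 3 f_equal. apply proof_irrelevance.
    + apply separated_remainders; auto.
Qed.

Lemma amg_j_finite_subcover (F : (AM -> Prop) -> Prop) i :
  (forall S, F S -> amg_isopen S) -> (forall p, exists S, F S /\ S p) ->
  exists ls, (forall S, In S ls -> F S) /\ forall e, exists S, In S ls /\ S (jj i e).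
Proof.
  intros HF Hcov.
  destruct (proj1 (HEc i) (fun O => isopen O /\ exists S, F S /\ forall e, O e -> S (jj i e)))
    as [lo [Hlo Hloc]].
  - intros O [HO _]; auto.
  - intros e. destruct (Hcov (jj i e)) as [S [FS Se]].
    exists (fun e => S (jj i e)). split; auto. split; [apply (continuous_amg_j i S (HF S FS)) |].
    exists S; auto.
  - destruct (list_choice (fun O S => F S /\ forall e, O e -> S (jj i e)) lo) as [ls [H1 H2]];
      [intros O HO; apply (Hlo O HO) |].
    exists ls. split.
    + intros S HS. destruct (H1 S HS) as [O [_ [? _]]]; auto.
    + intros e. destruct (Hloc e) as [O [HO Oe]]. destruct (H2 O HO) as [S [HS [_ HS']]]. eauto.
Qed.

(* Joined with an open extension of [U ∩ A], the open set [E(A) \ emb K] has trace [U ∩ A] on [A]. *)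
Lemma remainder_Wmax i (U K : X -> Prop) e : isopen U -> compact_set K ->
  (forall x, K x -> proj1_sig i x) -> (forall x, proj1_sig i x -> U x \/ K x) ->
  remainder i e -> WM i (fun a => U (proj1_sig a)) e.
Proof.
  intros HU HK HKA HAUK H.
  pose (C := fun e : E i => exists a, emb i a = e /\ K (proj1_sig a)).
  assert (HC : isclosed C) by (apply compact_set_closed; [apply HEc | apply compact_set_emb_image; auto]).
  destruct (emb_extend_open i U HU) as [WU [HWU HWU']].
  exists (fun e => ~ C e \/ WU e). split; [apply isopen_or; auto |]. split.
  - intros a; split.
    + intros [Hn | Wa]; [| apply HWU'; auto].
      destruct (HAUK (proj1_sig a) (proj2_sig a)) as [Ua | Ka]; auto.
      exfalso; apply Hn. exists a; auto.
    + intros Ua. right. apply HWU'; auto.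
  - left. intros [a [<- _]]. apply H; eauto.
Qed.

Lemma amg_cover_split (lu la : list (X -> Prop)) :
  (forall U, In U lu -> isopen U) ->
  (forall x, residual AA x -> exists U, In U lu /\ U x) ->
  (forall A, In A la -> AA A) ->
  (forall A, AA A -> ~ In A la ->
     exists U, In U lu /\ forall x, A x -> U x \/ exists A', In A' la /\ A' x) ->
  forall p : AM, (exists U, In U lu /\ VV U p) \/
                 (exists i e, In (proj1_sig i) la /\ jj i e = p).
Proof.
  intros Hlu Hres Hla Hout.
  assert (Hinl : forall x A, In A la -> A x ->
    exists i e, In (proj1_sig i) la /\ jj i e = inl x).
  { intros x A HA Ax. pose (i := exist _ A (Hla A HA) : Idx X AA).
    exists i, (emb i (exist _ x Ax)). split; auto. apply amg_j_emb. }
  intros [x | [i [e H]]].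
  - destruct (classic (residual AA x)) as [Hr | Hr]; [left; apply Hres; auto |].
    apply NNPP in Hr as [A [HAA Ax]].
    destruct (classic (In A la)) as [HA | HA]; [right; apply (Hinl x A); auto |].
    destruct (Hout A HAA HA) as [U [HU HUA]].
    destruct (HUA x Ax) as [Ux | [A' [HA' A'x]]];
      [left; exists U; auto | right; apply (Hinl x A'); auto].
  - destruct (classic (In (proj1_sig i) la)) as [HA | HA].
    + right. exists i, e. split; auto. apply amg_j_remainder.
    + left. destruct (Hout _ (proj2_sig i) HA) as [U [HU HUA]]. exists U. split; auto.
      apply (remainder_Wmax i U (fun x => proj1_sig i x /\ exists A', In A' la /\ A' x));
        auto; [| tauto | intros x Ax; destruct (HUA x Ax); auto].
      apply compact_set_meet_union. intros A' HA'.
      apply HA2; [apply (proj2_sig i) | auto | intros <-; contradiction].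
Qed.

Lemma amg_compact : compact AM.
Proof.
  intros F HF Hcov.
  destruct (HA3 (fun U => isopen U /\ exists S, F S /\ forall p, VV U p -> S p)) as [lu [Hlu Hluc]].
  { intros U [HU _]; auto. }
  { intros x Hx. destruct (Hcov (inl x)) as [S [FS Sx]].
    destruct (amg_open_residual_nbhd S (HF S FS) x Hx Sx) as [U [HU [Ux HUS]]].
    exists U; repeat split; eauto. }
  destruct (HA4 (fun U => In U lu)) as [la [Hla Hout]];
    [intros U HU; apply (Hlu U HU) | auto |].
  destruct (list_choice (fun U S => F S /\ forall p, VV U p -> S p) lu) as [ls1 [Hls1 Hls1']];
    [intros U HU; apply (Hlu U HU) |].
  destruct (list_choice (fun A ls => (forall S, In S ls -> F S) /\
      forall i, proj1_sig i = A -> forall e, exists S, In S ls /\ S (jj i e)) la) as [lls [Hll Hll']].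
  { intros A HA. destruct (amg_j_finite_subcover F (exist _ A (Hla A HA)) HF Hcov) as [ls [H1 H2]].
    exists ls. split; auto. intros i Hi. rewrite (sig_eq i (exist _ A (Hla A HA)) Hi). auto. }
  exists (ls1 ++ concat lls). split.
  - intros S HS. apply in_app_or in HS as [HS | HS].
    + destruct (Hls1 S HS) as [U [_ [? _]]]; auto.
    + apply in_concat in HS as [ls [Hls HS]]. destruct (Hll ls Hls) as [A [_ [H1 _]]]. auto.
  - intros p.
    destruct (amg_cover_split lu la (fun U HU => proj1 (Hlu U HU)) Hluc Hla Hout p)
      as [[U [HU HUp]] | [i [e [Hi <-]]]].
    + destruct (Hls1' U HU) as [S [HS [_ HSU]]]. exists S. split; [apply in_or_app | ]; auto.
    + destruct (Hll' _ Hi) as [ls [Hls [_ Hcovi]]]. destruct (Hcovi i eq_refl e) as [S [HS Se]].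
      exists S. split; auto. apply in_or_app; right. apply in_concat; eauto.
Qed.

Lemma amg_compactification : @compactification X AM amg_in.
Proof.
  repeat split; auto using amg_compact, amg_hausdorff, amg_in_dense;
    apply amg_in_embedding.
Qed.

End Amalgamation.

Lemma compactification_embedding_dense (Y K : space) (h : Y -> K) :
  compactification Y K h -> embedding h /\ dense_image h.
Proof. intros [_ [_ H]]; exact H. Qed.

Lemma compactification_compact_hausdorff (Y K : space) (h : Y -> K) :
  compactification Y K h -> compact K /\ hausdorff K.
Proof. intros [? [? _]]; auto. Qed.

Lemma compactification_regular (Y K : space) (h : Y -> K) :
  compactification Y K h -> regular K.
Proof. intros [? [? _]]. apply compact_hausdorff_regular; auto. Qed.

Section AmalgamationOfCompactifications.
Variables (X : space) (AA : (X -> Prop) -> Prop).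
Hypotheses (HX : hausdorff X)
  (HA1 : condA1 AA) (HA2 : condA2 AA) (HA3 : condA3 AA) (HA4 : condA4 AA).

Lemma amg_compactification_of (E : Idx X AA -> space) (emb : forall i, Asp i -> E i) :
  (forall i, compactification (Asp i) (E i) (emb i)) ->
  @compactification X (Amg X AA E emb) amg_in.
Proof.
  intros HE. apply amg_compactification; auto; intros i;
    [apply (compactification_embedding_dense _ _ _ (HE i)) |
     apply (compactification_compact_hausdorff _ _ _ (HE i))].
Qed.

Lemma amg_comp_ge (cE dE : Idx X AA -> space)
  (cemb : forall i, Asp i -> cE i) (demb : forall i, Asp i -> dE i) :
  (forall i, compactification (Asp i) (cE i) (cemb i)) ->
  (forall i, compactification (Asp i) (dE i) (demb i)) ->
  (forall i, comp_ge (demb i) (cemb i)) ->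
  comp_ge (@amg_in X AA dE demb : X -> Amg X AA dE demb)
          (@amg_in X AA cE cemb : X -> Amg X AA cE cemb).
Proof.
  intros hc hd Hge.
  pose proof (fun i => compactification_embedding_dense _ _ _ (hc i)) as Hc.
  pose proof (fun i => compactification_compact_hausdorff _ _ _ (hc i)) as HcC.
  destruct (amg_extend X AA dE demb (fun i => compactification_embedding_dense _ _ _ (hd i))
    (Amg X AA cE cemb) amg_in (compactification_regular _ _ _ (amg_compactification_of cE cemb hc)))
    as [F [HF HF']].
  - apply continuous_amg_in; auto.
  - intros i. destruct (Hge i) as [g [Hg Hgemb]].
    exists (fun e => amg_j i (g e)). split.
    + apply continuous_comp; auto. apply continuous_amg_j; auto.
    + intros a. rewrite Hgemb. apply amg_j_emb; auto.
  - exists F; auto.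
Qed.

Lemma closEmb_embedding (K : space) (h : X -> K) (i : Idx X AA) :
  embedding h -> embedding (closEmb AA K h i).
Proof.
  intros [hinj [hcont hopen]]. split; [| split].
  - intros a1 a2 Heq. apply (f_equal (@proj1_sig _ _)) in Heq. apply sig_eq, hinj, Heq.
  - intros V [W [HW HW']]. exists (fun x => W (h x)). split; [apply hcont; auto |].
    intros a. rewrite HW'. simpl. tauto.
  - intros U [U' [HU' HU'']]. destruct (hopen U' HU') as [W [HW HW']].
    exists (fun c => W (proj1_sig c)). split.
    + exists W; split; auto; tauto.
    + intros a. rewrite HU'', HW'. simpl. tauto.
Qed.

Lemma closEmb_dense (K : space) (h : X -> K) (i : Idx X AA) :
  dense_image (closEmb AA K h i).
Proof.
  intros W' [W [HW HW']] c Wc. apply HW' in Wc.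
  destruct (proj2_sig c W HW Wc) as [y [[x [Ax <-]] Wy]].
  exists (exist _ x Ax). apply HW'. exact Wy.
Qed.

Lemma amg_closure_comp_ge (K : space) (h : X -> K) : compactification X K h ->
  comp_ge (@amg_in X AA (closE AA K h) (closEmb AA K h)
             : X -> Amg X AA (closE AA K h) (closEmb AA K h)) h.
Proof.
  intros HK. destruct (compactification_embedding_dense _ _ _ HK) as [Hh _].
  destruct (amg_extend X AA (closE AA K h) (closEmb AA K h)
    (fun i => conj (closEmb_embedding K h i Hh) (closEmb_dense K h i))
    K h (compactification_regular _ _ _ HK)) as [F [HF HF']].
  - apply Hh.
  - intros i. exists (fun c => proj1_sig c). split; [apply continuous_proj1_sig | reflexivity].
  - exists F; auto.
Qed.

Lemma amg_cech_stone (bE : Idx X AA -> space) (bemb : forall i, Asp i -> bE i) :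
  (forall i, cech_stone (Asp i) (bE i) (bemb i)) ->
  cech_stone X (Amg X AA bE bemb) amg_in.
Proof.
  intros Hb. assert (Hbc : forall i, compactification (Asp i) (bE i) (bemb i)) by apply Hb.
  split; [apply amg_compactification_of; auto |].
  intros Z f HZc HZh Hf.
  apply (amg_extend X AA bE bemb (fun i => compactification_embedding_dense _ _ _ (Hbc i)));
    auto using compact_hausdorff_regular.
  intros i. apply (proj2 (Hb i)); auto.
  apply (continuous_comp (fun a : Asp i => proj1_sig a) f); auto. apply continuous_proj1_sig.
Qed.

End AmalgamationOfCompactifications.

Theorem proposition7p14
  (X : space) (AA : (X -> Prop) -> Prop)
  (hX : tychonoff X)
  (hA1 : condA1 AA) (hA2 : condA2 AA) (hA3 : condA3 AA) (hA4 : condA4 AA)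
  (cE : Idx X AA -> space) (cemb : forall i, Asp i -> cE i)
  (hc : forall i, compactification (Asp i) (cE i) (cemb i))
  (dE : Idx X AA -> space) (demb : forall i, Asp i -> dE i)
  (hd : forall i, compactification (Asp i) (dE i) (demb i)) :
  (* (i) *)
  (forall (E : Idx X AA -> space) (emb : forall i, Asp i -> E i),
     (forall i, embedding (emb i) /\ dense_image (emb i)) ->
     forall (Z : space) (f : Amg X AA E emb -> Z), regular Z ->
       (continuous f <->
        (continuous (fun x : X => f (amg_in x)) /\
         forall i, continuous (fun e : E i => f (amg_j i e))))) /\
  (* (ii) *)
  compactification X (Amg X AA cE cemb) amg_in /\
  (* (iii) *)
  ((forall i, comp_ge (demb i) (cemb i)) ->
     comp_ge (@amg_in X AA dE demb : X -> Amg X AA dE demb)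
             (@amg_in X AA cE cemb : X -> Amg X AA cE cemb)) /\
  (* (iv) *)
  (forall (K : space) (h : X -> K), compactification X K h ->
     comp_ge (@amg_in X AA (closE AA K h) (closEmb AA K h)
                : X -> Amg X AA (closE AA K h) (closEmb AA K h)) h) /\
  (* (v) *)
  (forall (bE : Idx X AA -> space) (bemb : forall i, Asp i -> bE i),
     (forall i, cech_stone (Asp i) (bE i) (bemb i)) ->
     cech_stone X (Amg X AA bE bemb) amg_in).
Proof.
  pose proof (tychonoff_hausdorff X hX) as HX.
  split; [| split; [| split; [| split]]].
  - intros E emb Hemb Z f HZ. apply amg_continuous_iff; auto.
  - apply amg_compactification_of; auto.
  - apply amg_comp_ge; auto.
  - apply amg_closure_comp_ge; auto.
  - apply amg_cech_stone; auto.
Qed.
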